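(* Let $n\ge 2$ and let $G\in\mathcal{G}_{2n}$ with $F(G)=n-1$. Then: (i) $G$ has no fixed double bond, i.e. $G-e$ has a perfect matching for every edge $e$ of $G$; (ii) the connectivity satisfies $\kappa(G)\geq n$. Moreover, if $G$ is minimal, then $G$ is $n$-regular and $\kappa(G)=\lambda(G)=n$, where $\lambda(G)$ is the edge connectivity.
   Context: All graphs are finite and simple. $\mathcal{G}_{2n}$ denotes the set of all graphs with $2n$ vertices that have a perfect matching. For a perfect matching $M$ of $G$, a forcing set of $M$ is a subset $S\subseteq M$ contained in no other perfect matching of $G$; $f(G,M)$ is the minimum size of a forcing set of $M$, and $F(G)$ is the maximum of $f(G,M)$ over all perfect matchings $M$ of $G$. A fixed double bond is an edge contained in every perfect matching. A graph $G\in\mathcal{G}_{2n}$ with $F(G)=n-1$ is called minimal if $F(G-e)\leq n-2$ for each edge $e$ of $G$. *)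

From mathcomp Require Import all_boot.
Set Implicit Arguments. Unset Strict Implicit. Unset Printing Implicit Defensive.

(* A finite simple graph with vertex type T (a finType) is given by its
   edge set E : {set {set T}}, every edge being a 2-element vertex set. *)
Section Graphs.
Variable T : finType.

Definition simple_graph (E : {set {set T}}) : Prop :=
  forall e, e \in E -> #|e| = 2.

Definition perfect_matching (E M : {set {set T}}) : bool :=
  (M \subset E) && [forall v : T, #|[set e in M | v \in e]| == 1].

Definition has_pm (E : {set {set T}}) : Prop := exists M, perfect_matching E M.

Definition forcing (E M S : {set {set T}}) : bool :=
  (S \subset M) &&
  [forall M' : {set {set T}}, (perfect_matching E M' && (S \subset M')) ==> (M' == M)].

(* f(G,M): minimum size of a forcing set of M (M itself is one). *)
Definition fnum (E M : {set {set T}}) : nat :=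
  \big[minn/#|M|]_(S : {set {set T}} | forcing E M S) #|S|.

Definition Fnum (E : {set {set T}}) : nat :=
  \max_(M : {set {set T}} | perfect_matching E M) fnum E M.

Definition fixed_double_bond (E : {set {set T}}) (e : {set T}) : Prop :=
  e \in E /\ forall M, perfect_matching E M -> e \in M.

Definition adj (E : {set {set T}}) (x y : T) : bool := [set x; y] \in E.

Definition connected_minus (E : {set {set T}}) (S : {set T}) : bool :=
  [forall x, forall y, (x \notin S) ==> (y \notin S) ==>
     connect [rel a b | (a \notin S) && (b \notin S) && adj E a b] x y].

Definition connected (E : {set {set T}}) : bool := connected_minus E set0.

Definition kappa (E : {set {set T}}) : nat :=
  \big[minn/#|T|]_(S : {set T} | ~~ connected_minus E S || (#|~: S| <= 1)) #|S|.

Definition lambda (E : {set {set T}}) : nat :=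
  \big[minn/#|E|]_(D : {set {set T}} | (D \subset E) && ~~ connected (E :\: D)) #|D|.

Definition deg (E : {set {set T}}) (v : T) : nat := #|[set e in E | v \in e]|.

Definition regular (E : {set {set T}}) (k : nat) : Prop := forall v, deg E v = k.

Definition minimal (n : nat) (E : {set {set T}}) : Prop :=
  Fnum E = n.-1 /\ forall e, e \in E -> Fnum (E :\ e) <= n - 2.

End Graphs.

From mathcomp Require Import all_boot zify.
Set Implicit Arguments. Unset Strict Implicit. Unset Printing Implicit Defensive.

(* Lemma 2.3.  Fix a perfect matching M of G with f(G,M) = n - 1 = |M| - 1.
   As no n - 2 edges of M force M, every pair {a, b} of edges of M can be
   switched: some perfect matching M' <> M contains M - {a, b}, and it avoids
   a and b (switchableP, switch_avoids).  So every vertex of a matching edge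
   has a neighbour in each other matching edge (cross_adjacent).  Hence no
   edge is in all perfect matchings; deleting fewer than n vertices spares a
   matching edge adjacent to all remaining vertices (kappa >= n); and all
   degrees are >= n.  If G is minimal, each non-matching edge lies in every
   switch of one pair of matching edges (forced_pair), so distinct edges at a
   vertex reach distinct matching edges: degrees are <= n.  In the n-regular
   graph, isolating a vertex gives kappa, lambda <= n, and counting edges
   across a cut (minimum degree n on 2n vertices) gives lambda >= n. *)

Lemma bigmin_leq (I : finType) (P : pred I) (F : I -> nat) d i0 :
  P i0 -> \big[minn/d]_(i | P i) F i <= F i0.
Proof.
move=> Pi0; elim: (index_enum I) (mem_index_enum i0) => [//|a r IH].
rewrite inE big_cons => /orP[/eqP <-|ir]; first by rewrite Pi0 geq_minl.
case: (P a); last exact: IH.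
exact: leq_trans (geq_minr _ _) (IH ir).
Qed.

Lemma leq_bigmin (I : finType) (P : pred I) (F : I -> nat) d k :
  k <= d -> (forall i, P i -> k <= F i) -> k <= \big[minn/d]_(i | P i) F i.
Proof.
move=> kd kF; apply: (big_ind (fun m => k <= m)) => // x y kx ky.
by rewrite leq_min kx ky.
Qed.

Lemma card_sep (I : finType) (B : {set I}) (p : pred I) :
  #|[set y in B | p y]| = \sum_(y in B) p y.
Proof.
rewrite -sum1_card (eq_bigl (fun y => (y \in B) && p y)) => [|y]; last by rewrite inE.
by rewrite big_mkcondr; apply: eq_bigr => y _; case: (p y).
Qed.

Section FiniteSets.
Variable T : finType.
Implicit Types (e f g : {set T}) (x y : T).

Lemma card2_eq_pair g x y : #|g| = 2 -> x \in g -> y \in g -> x != y -> g = [set x; y].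
Proof.
move=> g2 xg yg xy; apply/esym/eqP.
by rewrite eqEcard subUset !sub1set xg yg cards2 xy g2.
Qed.

Lemma card2_pair f x : #|f| = 2 -> x \in f -> exists2 y, y != x & f = [set x; y].
Proof.
move=> f2 xf; have : #|f :\ x| = 1 by have := cardsD1 x f; rewrite xf f2; lia.
move/eqP/cards1P=> [y fxy]; have : y \in f :\ x by rewrite fxy set11.
rewrite !inE => /andP[yx yf]; exists y => //.
by apply: card2_eq_pair; rewrite // eq_sym.
Qed.

(* The other end of an edge f at x (x itself if there is none). *)
Definition far x f : T := odflt x [pick y in f :\ x].

Lemma far_pair x y : y != x -> far x [set x; y] = y.
Proof.
move=> yx; rewrite /far; case: pickP => [z|/(_ y)]; last by rewrite !inE yx eqxx orbT.
by rewrite !inE => /andP[zx /orP[/eqP zx'|/eqP ->]] //; rewrite zx' eqxx in zx.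
Qed.

Lemma far_edge x f : #|f| = 2 -> x \in f -> far x f != x /\ f = [set x; far x f].
Proof. by move=> f2 xf; have [y yx ->] := card2_pair f2 xf; rewrite far_pair. Qed.

Lemma sum_incidence (C : {set {set T}}) (P : {set T}) :
  \sum_(x in P) #|[set e in C | x \in e]| = \sum_(e in C) #|e :&: P|.
Proof.
under eq_bigr => x _ do rewrite (card_sep C (fun e => x \in e)).
rewrite exchange_big; apply: eq_bigr => e _.
by rewrite -(card_sep P (fun x => x \in e)); apply: eq_card => x; rewrite !inE andbC.
Qed.

End FiniteSets.

Definition avoid_rel (T : finType) (E : {set {set T}}) (S : {set T}) : rel T :=
  [rel x y | (x \notin S) && (y \notin S) && adj E x y].

Lemma avoid_rel_sym (T : finType) (E : {set {set T}}) (S : {set T}) :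
  connect_sym (avoid_rel E S).
Proof.
apply: sym_connect_sym => x y; rewrite /avoid_rel /= /adj setUC.
by rewrite [(x \notin S) && _]andbC.
Qed.

Lemma connected_minusP (T : finType) (E : {set {set T}}) (S : {set T}) :
  (forall x y, x \notin S -> y \notin S -> connect (avoid_rel E S) x y) ->
  connected_minus E S.
Proof.
move=> conn; apply/forallP => x; apply/forallP => y.
by apply/implyP => xS; apply/implyP => yS; exact: conn.
Qed.

Section Connectivity.
Variables (T : finType) (E : {set {set T}}).
Hypothesis sE : simple_graph E.
Implicit Types (S P : {set T}) (D : {set {set T}}) (v w x y : T).

Lemma isolated_connect (r : rel T) v y : (forall x, ~~ r v x) -> connect r v y -> y = v.
Proof.
move=> iso /connectP [[|x p] /= path_vp ->] //.
by move: path_vp => /andP[rvx _]; move: (iso x); rewrite rvx.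
Qed.

(* Deleting the neighbourhood of v isolates v. *)
Lemma kappa_upper v : (deg E v).+1 < #|T| -> kappa E <= deg E v.
Proof.
move=> degT; set N := [set w | [set v; w] \in E].
have vN : v \notin N by rewrite inE setUid; apply/negP => /sE; rewrite cards1.
have Ndeg : #|N| <= deg E v.
  apply: leq_trans (leq_imset_card (far v) [set e in E | v \in e]).
  apply: subset_leq_card; apply/subsetP => w wN; apply/imsetP; exists [set v; w].
    by rewrite inE set21 andbT; move: wN; rewrite inE.
  by rewrite far_pair //; apply: contraNneq vN => <-.
have [y] : exists y, y \in ~: (v |: N).
  by apply/card_gt0P; have := cardsC (v |: N); rewrite cardsU1 vN; lia.
rewrite in_setC in_setU1 negb_or => /andP[yv yN].
apply: leq_trans (bigmin_leq _ _ _) Ndeg; apply/orP; left.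
have iso x : ~~ avoid_rel E N v x.
  by rewrite /avoid_rel /= /adj; apply/negP => /andP[/andP[_ xN] vxE]; rewrite inE vxE in xN.
apply/negP => /forallP /(_ v) /forallP /(_ y); rewrite vN yN /=.
by move/(isolated_connect iso) => yv'; rewrite yv' eqxx in yv.
Qed.

(* Deleting the edges at v isolates v. *)
Lemma lambda_upper v : 1 < #|T| -> lambda E <= deg E v.
Proof.
move=> T2; set D := [set e in E | v \in e].
have [y] : exists y, y \in [set~ v] by apply/card_gt0P; rewrite cardsC1; lia.
rewrite !inE => yv; apply: bigmin_leq; apply/andP; split.
  by apply/subsetP => e; rewrite inE => /andP[].
have iso x : ~~ avoid_rel (E :\: D) set0 v x.
  by rewrite /avoid_rel /= /adj in_setD !in_set0 in_set set21 andbT andNb andbF.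
apply/negP => /forallP /(_ v) /forallP /(_ y); rewrite !in_set0 /=.
by move/(isolated_connect iso) => yv'; rewrite yv' eqxx in yv.
Qed.

Definition cut P : {set {set T}} := [set e in E | ~~ (e \subset P) && ~~ (e \subset ~: P)].

Lemma cutC P : cut (~: P) = cut P.
Proof. by apply/setP => e; rewrite !inE setCK [~~ _ && _]andbC. Qed.

(* Degree counting across a cut: with minimum degree k, a set P of p vertices,
   0 < p <= k, sends at least k - (p - 1) cut edges out of each of its
   vertices, hence at least p * (k - p + 1) >= k edges in total. *)
Lemma cut_lower k P : (forall v, k <= deg E v) -> 0 < #|P| <= k -> k <= #|cut P|.
Proof.
move=> mindeg /andP[P_gt0 Pk].
have incident x : x \in P -> k - #|P|.-1 <= #|[set e in cut P | x \in e]|.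
  move=> xP.
  have inner : #|[set e in E | (x \in e) && (e \subset P)]| <= #|P|.-1.
    rewrite (cardsD1 x P) xP add1n /=.
    apply: leq_trans (leq_imset_card (fun w => [set x; w]) (P :\ x)).
    apply: subset_leq_card; apply/subsetP => e; rewrite inE => /and3P[eE xe eP].
    have [w wx ew] := card2_pair (sE eE) xe; apply/imsetP; exists w => //.
    by rewrite !inE wx (subsetP eP) // ew set22.
  have edges_x : deg E x <= #|[set e in E | (x \in e) && (e \subset P)]| +
                            #|[set e in cut P | x \in e]|.
    apply: leq_trans (leq_card_setU _ _).1; apply: subset_leq_card.
    apply/subsetP => e; rewrite !inE => /andP[eE xe]; rewrite eE xe /=.
    case: (boolP (e \subset P)) => //= _; rewrite andbT; apply/negP => /subsetP eCP.
    by move: (eCP x xe); rewrite inE xP.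
  have := mindeg x; lia.
have once : #|cut P| = \sum_(x in P) #|[set e in cut P | x \in e]|.
  rewrite sum_incidence -sum1_card; apply: eq_bigr => e.
  rewrite inE => /andP[eE /andP[eP eCP]].
  have : 0 < #|e :\: P| by rewrite card_gt0 setD_eq0.
  have : 0 < #|e :&: P| by rewrite card_gt0 setI_eq0 disjoints_subset.
  by have := cardsID P e; rewrite (sE eE); lia.
rewrite once; apply: (leq_trans _ (leq_sum _ incident)); rewrite sum_nat_const; nia.
Qed.

(* If E - D is disconnected, a connected component P of E - D has all its
   cut edges in D. *)
Lemma disconnected_cut D : ~~ connected (E :\: D) ->
  exists P, [/\ 0 < #|P|, 0 < #|~: P| & cut P \subset D].
Proof.
case/forallPn => x /forallPn [y]; rewrite !in_set0 /= => nxy.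
exists [set z | connect (avoid_rel (E :\: D) set0) x z]; split.
- by apply/card_gt0P; exists x; rewrite inE connect0.
- by apply/card_gt0P; exists y; rewrite !inE.
apply/subsetP => e; rewrite inE => /andP[eE /andP[]].
case/subsetPn => w we wP /subsetPn[u ue]; rewrite !inE negbK => uP.
have uw : u != w by apply: contraNneq wP => <-; rewrite inE.
apply/negPn/negP => eD; move: wP; rewrite inE; case/negP.
apply: connect_trans uP (connect1 _); rewrite /avoid_rel /= !in_set0 /adj /=.
by rewrite -(card2_eq_pair (sE eE) ue we uw) !inE eD eE.
Qed.

Lemma edge_connected k D : (forall v, k <= deg E v) -> #|T| <= k.*2 -> #|D| < k ->
  connected (E :\: D).
Proof.
move=> mindeg Tk Dk; apply/negPn/negP => /disconnected_cut [P [P0 CP0 cutD]].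
have [Q [Q0 Qk cutQ]] : exists Q : {set T}, [/\ 0 < #|Q|, #|Q| <= k & cut Q \subset D].
  have := cardsC P; case: (leqP #|P| k) => Pk TP; first by exists P.
  by exists (~: P); rewrite cutC; split => //; lia.
have Q_bounds : 0 < #|Q| <= k by rewrite Q0 Qk.
by have := cut_lower mindeg Q_bounds; have := subset_leq_card cutQ; lia.
Qed.

Lemma lambda_lower k : 0 < #|T| -> (forall v, k <= deg E v) -> #|T| <= k.*2 ->
  k <= lambda E.
Proof.
move=> T0 mindeg Tk; apply: leq_bigmin => [|D /andP[_ ncD]].
  case/card_gt0P: T0 => v _; apply: leq_trans (mindeg v) _.
  by apply: subset_leq_card; apply/subsetP => e; rewrite inE => /andP[].
rewrite leqNgt; apply/negP => Dk; case/negP: ncD; exact: edge_connected.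
Qed.

End Connectivity.

Section Matchings.
Variables (T : finType) (E : {set {set T}}).
Hypothesis sE : simple_graph E.
Implicit Types (M : {set {set T}}) (e f g : {set T}) (v x y : T).

Lemma pm_sub M : perfect_matching E M -> M \subset E.
Proof. by case/andP. Qed.

Lemma pm_card1 M v : perfect_matching E M -> #|[set e in M | v \in e]| = 1.
Proof. by case/andP=> _ /forallP /(_ v) /eqP. Qed.

Lemma pm_edge M e : perfect_matching E M -> e \in M -> #|e| = 2.
Proof. by move=> /pm_sub /subsetP sME /sME /sE. Qed.

Lemma pm_cover M v : perfect_matching E M -> exists2 e, e \in M & v \in e.
Proof.
move=> /(pm_card1 v) /eqP /cards1P [e Me].
have : e \in [set e in M | v \in e] by rewrite Me set11.
by rewrite inE => /andP[]; exists e.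
Qed.

Lemma pm_uniq M v e f : perfect_matching E M -> e \in M -> f \in M ->
  v \in e -> v \in f -> e = f.
Proof.
move=> /(pm_card1 v) /eqP /cards1P [g Mg] eM fM ve vf.
have : e \in [set e in M | v \in e] by rewrite inE eM ve.
have : f \in [set e in M | v \in e] by rewrite inE fM vf.
by rewrite Mg !inE => /eqP -> /eqP ->.
Qed.

Lemma pm_delete M e : perfect_matching E M -> e \notin M -> perfect_matching (E :\ e) M.
Proof.
case/andP=> sME cover eM; rewrite /perfect_matching cover andbT.
by apply/subsetP => g gM; rewrite !inE (subsetP sME) // andbT; apply: contraNneq eM => <-.
Qed.

(* Counting vertex-edge incidences, a perfect matching has #|T|/2 edges. *)
Lemma pm_card M : perfect_matching E M -> #|T| = #|M|.*2.
Proof.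
move=> pM; have := sum_incidence M [set: T].
under eq_bigr => v _ do rewrite (pm_card1 v pM).
under [RHS]eq_bigr => e eM do rewrite setIT (pm_edge pM eM).
by rewrite !sum_nat_const cardsT muln1 muln2.
Qed.

(* Perfect matchings all have the same size, so none contains another. *)
Lemma pm_eq_sub M M' : perfect_matching E M -> perfect_matching E M' ->
  M \subset M' -> M' = M.
Proof.
move=> pM pM' sMM'; apply/eqP; rewrite eq_sym eqEcard sMM'.
have := pm_card pM'; rewrite (pm_card pM) => /double_inj ->.
by rewrite leqnn.
Qed.

(* Fewer than #|M| vertices miss some edge of the matching M (each vertex
   lies in one edge of M). *)
Lemma pm_avoid M (S : {set T}) : perfect_matching E M -> #|S| < #|M| ->
  exists2 f, f \in M & [disjoint f & S].
Proof.
move=> pM ltSM; case: (boolP [exists f in M, [disjoint f & S]]).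
  by case/exists_inP => f; exists f.
rewrite negb_exists_in => /forall_inP meetS; move: ltSM; rewrite ltnNge; case/negP.
have := sum_incidence M S; under eq_bigr => v _ do rewrite (pm_card1 v pM).
rewrite sum_nat_const muln1 => ->; rewrite -sum1_card; apply: leq_sum => f fM.
by rewrite card_gt0 setI_eq0; exact: meetS.
Qed.

Lemma pm_restore M M' g : perfect_matching E M -> perfect_matching E M' -> g \in M ->
  M :\ g \subset M' -> g \in M'.
Proof.
move=> pM pM' gM sub.
have [x xg] : exists x, x \in g by apply/card_gt0P; rewrite (pm_edge pM gM).
have [h hM' xh] := pm_cover x pM'.
suff -> : g = h by [].
apply/esym/eqP; rewrite eqEcard (pm_edge pM gM) (pm_edge pM' hM') leqnn andbT.
apply/subsetP => y yh; have [k kM yk] := pm_cover y pM.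
have [<-|kg] := eqVneq k g; first by [].
have kh : k = h by apply: (pm_uniq pM' _ hM' yk yh); apply: (subsetP sub); rewrite !inE kg.
by move: kg; rewrite (pm_uniq pM kM gM (_ : x \in k) xg) ?eqxx ?kh.
Qed.

Definition mate M v : {set T} := odflt set0 [pick e in M | v \in e].

Lemma mate_eq M v e : perfect_matching E M -> e \in M -> v \in e -> mate M v = e.
Proof.
move=> pM eM ve; rewrite /mate; case: pickP => [f /andP[fM vf]|/(_ e)].
  exact: pm_uniq pM fM eM vf ve.
by rewrite eM ve.
Qed.

Lemma mateP M v : perfect_matching E M -> mate M v \in M /\ v \in mate M v.
Proof. by move=> pM; have [e eM ve] := pm_cover v pM; rewrite (mate_eq pM eM ve). Qed.

End Matchings.

Definition pair_switch (T : finType) (E M : {set {set T}}) (a b : {set T})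
  (M' : {set {set T}}) : bool :=
  [&& perfect_matching E M', M :\: [set a; b] \subset M' & M' != M].

Definition switchable (T : finType) (E M : {set {set T}}) : Prop :=
  forall a b, a \in M -> b \in M -> a != b -> exists M', pair_switch E M a b M'.

Lemma fnum_le (T : finType) (E M S : {set {set T}}) : forcing E M S -> fnum E M <= #|S|.
Proof. exact: bigmin_leq. Qed.

Section Switches.
Variables (T : finType) (E M : {set {set T}}).
Hypotheses (sE : simple_graph E) (pM : perfect_matching E M).
Implicit Types (a b f g : {set T}) (v : T).

Lemma switch_avoids a b M' : pair_switch E M a b M' -> a \notin M'.
Proof.
case/and3P=> pM' sub neM; apply: contra neM => aM'; apply/eqP/(pm_eq_sub sE pM pM').
have subb : M :\ b \subset M'.
  apply/subsetP => g; rewrite !inE => /andP[gb gM]; have [->|ga] := eqVneq g a => //.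
  by apply: (subsetP sub); rewrite !inE negb_or ga gb gM.
apply/subsetP => g gM; have [gb|gb] := eqVneq g b.
  by rewrite gb (pm_restore sE pM pM') // -gb.
by apply: (subsetP subb); rewrite !inE gb gM.
Qed.

Lemma switch_member a b M' f g v : pair_switch E M a b M' -> f \in M' -> f \notin M ->
  v \in f -> g \in M -> v \in g -> g \in [set a; b].
Proof.
case/and3P=> pM' sub _ fM' fM vf gM vg; apply: contraNT fM => gab.
have gM' : g \in M' by apply: (subsetP sub); rewrite inE gab gM.
by rewrite (pm_uniq pM' fM' gM' vf vg).
Qed.

Lemma switchableP : switchable E M <-> #|M|.-1 <= fnum E M.
Proof.
split=> [sw | le_fnum].
  apply: leq_bigmin => [|S]; first exact: leq_pred.
  case/andP=> SM /forallP forceS; rewrite leqNgt; apply/negP => ltS.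
  have : 1 < #|M :\: S| by rewrite cardsD (setIidPr SM); lia.
  case/card_gt1P => a [b [/setDP[aM aS] /setDP[bM bS] ab]].
  have [M' /and3P[pM' sub neM]] := sw a b aM bM ab.
  move: (forceS M'); rewrite pM' (negbTE neM) /= implybF; case/negP.
  apply/subsetP => s sS; apply: (subsetP sub); rewrite !inE (subsetP SM) // andbT.
  by rewrite negb_or; apply/andP; split; apply/eqP => es; [move: aS|move: bS]; rewrite -es sS.
move=> a b aM bM ab; set S := M :\: [set a; b].
have abM : [set a; b] \subset M by rewrite subUset !sub1set aM bM.
have cS : #|S| = #|M| - 2 by rewrite cardsD (setIidPr abM) cards2 ab.
have M2 : 2 <= #|M| by have := subset_leq_card abM; rewrite cards2 ab.
have : ~~ forcing E M S by apply/negP => /fnum_le; lia.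
rewrite /forcing subsetDl /= => /forallPn [M']; rewrite negb_imply => /andP[/andP[pM' SM'] neM].
by exists M'; rewrite /pair_switch pM' SM' neM.
Qed.

End Switches.

Section Switchable.
Variables (T : finType) (E M : {set {set T}}).
Hypotheses (sE : simple_graph E) (pM : perfect_matching E M) (swM : switchable E M).
Implicit Types (a b e f g S : {set T}) (v x y : T).

(* Each vertex x of a matching edge a has a neighbour in every other matching
   edge b: in a switch of {a, b}, the edge at x is new and ends in b. *)
Lemma cross_adjacent a b x : a \in M -> b \in M -> a != b -> x \in a ->
  exists2 y, y \in b & [set x; y] \in E.
Proof.
move=> aM bM ab xa; have [M' sw] := swM aM bM ab; have /and3P[pM' _ _] := sw.
have [h hM' xh] := pm_cover x pM'.
have [y yx hxy] := card2_pair (pm_edge sE pM' hM') xh.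
have ha : h != a by apply: contraNneq (switch_avoids sE pM sw) => <-.
have hM : h \notin M by apply: contra ha => hM; rewrite (pm_uniq pM hM aM xh xa).
have [gM yg] := mateP y pM.
have yh : y \in h by rewrite hxy set22.
have := switch_member sw hM' hM yh gM yg; rewrite !inE => /orP[/eqP ga|/eqP gb]; last first.
  by exists y; rewrite -?gb // -hxy (subsetP (pm_sub pM')).
have ya : y \in a by rewrite -ga.
case/negP: ha; rewrite hxy (card2_eq_pair (pm_edge sE pM aM) xa ya) //.
by rewrite eq_sym.
Qed.

Lemma pm_avoiding e : 1 < #|M| -> exists2 M', perfect_matching E M' & e \notin M'.
Proof.
move=> M2; have [eM|eM] := boolP (e \in M); last by exists M.
have : 0 < #|M :\ e| by move: M2; rewrite (cardsD1 e M) eM add1n ltnS.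
case/card_gt0P => b; rewrite !inE => /andP[be bM].
have eb : e != b by rewrite eq_sym.
have [M' sw] := swM eM bM eb.
exists M'; last exact: (switch_avoids sE pM sw).
by case/and3P: sw.
Qed.

(* Deleting fewer than #|M| vertices leaves the graph connected: some matching
   edge f survives, and every remaining vertex is adjacent to f. *)
Lemma connected_minus_small S : #|S| < #|M| -> connected_minus E S.
Proof.
move=> ltS; have [f fM dfS] := pm_avoid pM ltS.
have fS z : z \in f -> z \notin S by move=> zf; rewrite (disjointFr dfS zf).
have in_f y z : y \in f -> z \in f -> connect (avoid_rel E S) y z.
  move=> yf zf; have [<-|yz] := eqVneq y z; first exact: connect0.
  apply: connect1; rewrite /avoid_rel /= !fS //= /adj.
  rewrite -(card2_eq_pair (pm_edge sE pM fM) yf zf yz).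
  exact: subsetP (pm_sub pM) _ fM.
have to_f x z : x \notin S -> z \in f -> connect (avoid_rel E S) x z.
  move=> xS zf; have [g gM xg] := pm_cover x pM.
  have [gf|gf] := eqVneq g f; first by apply: in_f; rewrite // -gf.
  have [y yf xyE] := cross_adjacent gM fM gf xg.
  by apply: connect_trans (in_f y z yf zf); apply: connect1; rewrite /avoid_rel /= xS fS.
apply: connected_minusP => x y xS yS.
have [z zf] : exists z, z \in f by apply/card_gt0P; rewrite (pm_edge sE pM fM).
by apply: connect_trans (to_f x z xS zf) _; rewrite avoid_rel_sym; apply: to_f.
Qed.

(* Deleting fewer than #|M| vertices leaves at least #|M| + 1 >= 2 vertices,
   so the vertex connectivity is at least #|M|. *)
Lemma kappa_lower : #|M| <= kappa E.
Proof.
apply: leq_bigmin => [|S cut_S]; first by rewrite (pm_card sE pM) -addnn leq_addr.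
rewrite leqNgt; apply/negP => ltS; move: cut_S.
rewrite connected_minus_small //=; have := cardsC S; rewrite (pm_card sE pM); lia.
Qed.

(* The far ends of the edges at v meet every matching edge, so v has degree
   at least #|M|. *)
Lemma deg_lower v : #|M| <= deg E v.
Proof.
rewrite /deg; apply: leq_trans (leq_imset_card (fun f => mate M (far v f)) _).
apply: subset_leq_card; apply/subsetP => g gM; apply/imsetP.
have [a aM va] := pm_cover v pM; have [_ a_pair] := far_edge (pm_edge sE pM aM) va.
have [-> | ga] := eqVneq g a.
  exists a; first by rewrite inE (subsetP (pm_sub pM)) // va.
  by rewrite (mate_eq pM aM) // {2}a_pair set22.
have ag : a != g by rewrite eq_sym.
have [y yg vyE] := cross_adjacent aM gM ag va.
have yv : y != v.
  by apply: contra ga => /eqP yv; rewrite -yv in va; rewrite (pm_uniq pM gM aM yg va).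
exists [set v; y]; first by rewrite inE vyE set21.
by rewrite /= far_pair // (mate_eq pM gM yg).
Qed.

End Switchable.

Section Minimal.
Variables (T : finType) (E M : {set {set T}}).
Hypotheses (sE : simple_graph E) (pM : perfect_matching E M) (swM : switchable E M).
Hypothesis minE : forall e, e \in E -> Fnum (E :\ e) < #|M|.-1.
Implicit Types (a b e f g : {set T}) (v x y : T).

(* Each edge e outside M belongs to every switch of some pair of matching
   edges; otherwise M would stay switchable, hence keep forcing number
   #|M| - 1, in the graph E - e. *)
Lemma forced_pair e : e \in E -> e \notin M ->
  exists a b, [/\ a \in M, b \in M, a != b &
                  forall M', pair_switch E M a b M' -> e \in M'].
Proof.
move=> eE eM.
case: (boolP [exists a, exists b, [&& a \in M, b \in M, a != b &
                 [forall M', pair_switch E M a b M' ==> (e \in M')]]]).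
  case/existsP => a /existsP[b /and4P[aM bM ab /forallP forced]].
  by exists a, b; split=> // M' /(implyP (forced M')).
rewrite negb_exists => /forallP unforced; exfalso.
have pMe := pm_delete pM eM.
have sw_e : switchable (E :\ e) M.
  move=> a b aM bM ab; move: (unforced a) => /existsPn /(_ b).
  rewrite aM bM ab /= negb_forall => /existsP[M'].
  rewrite negb_imply => /andP[/and3P[pM' sub neM] eM'].
  by exists M'; rewrite /pair_switch (pm_delete pM' eM') sub neM.
have := minE eE; rewrite ltnNge; case/negP.
exact: leq_trans ((switchableP pMe).1 sw_e) (leq_bigmax_cond _ pMe).
Qed.

Lemma edge_in_switches f x y a g M' : f \in E -> f \notin M -> x \in f -> y \in f ->
  x != y -> a \in M -> g \in M -> x \in a -> y \in g ->
  pair_switch E M a g M' -> f \in M'.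
Proof.
move=> fE fM xf yf xy aM gM xa yg sw.
have [c [d [cM dM cd forced]]] := forced_pair fE fM.
have [M1 sw1] := swM cM dM cd; have fM1 := forced M1 sw1.
have acd := switch_member sw1 fM1 fM xf aM xa.
have gcd := switch_member sw1 fM1 fM yf gM yg.
have ag : a != g.
  apply: contraNneq fM => ag; rewrite -ag in yg.
  by rewrite (card2_eq_pair (sE fE) xf yf xy) -(card2_eq_pair (pm_edge sE pM aM) xa yg xy).
have cd_ag : [set c; d] = [set a; g] by apply: card2_eq_pair; rewrite ?cards2 ?cd.
by apply: forced; rewrite /pair_switch cd_ag.
Qed.

(* The map sending an edge at v to the matching edge at its far end is
   injective, so v has at most #|M| incident edges. *)
Lemma deg_upper v : deg E v <= #|M|.
Proof.
set A := [set f in E | v \in f]; pose phi f := mate M (far v f).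
have [a aM va] := pm_cover v pM.
have farP f : f \in A -> far v f != v /\ f = [set v; far v f].
  by rewrite inE => /andP[fE vf]; apply: far_edge (sE fE) vf.
have phiP f : phi f \in M /\ far v f \in phi f by exact: (mateP (far v f) pM).
have phi_a f : f \in A -> phi f = a -> f = a.
  move=> fA fa; have [fv fvw] := farP f fA; have [_] := phiP f; rewrite fa => wa.
  by rewrite fvw -(card2_eq_pair (pm_edge sE pM aM) va wa) // eq_sym.
have phi_switch f M' : f \in A -> phi f != a -> pair_switch E M a (phi f) M' -> f \in M'.
  move=> fA fa; have [fv fvw] := farP f fA.
  move: fA; rewrite inE => /andP[fE vf].
  have wf : far v f \in f by rewrite {2}fvw set22.
  have fM : f \notin M.
    apply: contra fa => fM; rewrite /phi (mate_eq pM fM wf).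
    by rewrite (pm_uniq pM fM aM vf va).
  by apply: edge_in_switches fE fM vf wf _ aM (phiP f).1 va (phiP f).2; rewrite eq_sym.
have inj : {in A &, injective phi}.
  move=> f f' fA f'A phi_ff'; have [fa|fa] := eqVneq (phi f) a.
    by rewrite (phi_a f) // (phi_a f') // -phi_ff'.
  have af : a != phi f by rewrite eq_sym.
  have [M' sw] := swM aM (phiP f).1 af.
  have /and3P[pM' _ _] := sw.
  move: (fA) (f'A); rewrite !inE => /andP[_ vf] /andP[_ vf'].
  apply: (pm_uniq pM' (phi_switch f M' fA fa sw) _ vf vf').
  by apply: phi_switch; rewrite -?phi_ff'.
rewrite /deg -/A -(card_in_imset inj); apply: subset_leq_card.
by apply/subsetP => g /imsetP[f _ ->]; case: (phiP f).
Qed.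

End Minimal.

Theorem lemma2p3 (T : finType) (n : nat) (E : {set {set T}}) :
  2 <= n -> #|T| = n.*2 -> simple_graph E -> has_pm E -> Fnum E = n.-1 ->
  [/\ (forall e, ~ fixed_double_bond E e),
      (forall e, e \in E -> has_pm (E :\ e)),
      n <= kappa E &
      (minimal n E -> regular E n /\ kappa E = n /\ lambda E = n)].
Proof.
move=> n2 cT sE [M0 pM0] FE.
have [M pM fM] : exists2 M, perfect_matching E M & fnum E M = n.-1.
  have : 0 < #|perfect_matching E| by apply/card_gt0P; exists M0.
  by case/(eq_bigmax_cond (fnum E)) => M pM maxM; exists M; rewrite // -FE -maxM.
have cM : #|M| = n by apply: double_inj; rewrite -cT (pm_card sE pM).
have swM : switchable E M by apply/(switchableP pM); rewrite cM fM.
have mindeg v : n <= deg E v by rewrite -cM (deg_lower sE pM swM).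
have avoid e : exists2 M', perfect_matching E M' & e \notin M'.
  by apply: (pm_avoiding sE pM swM); rewrite cM.
have kappa_n : n <= kappa E by rewrite -cM (kappa_lower sE pM swM).
split.
- by move=> e [_ eM]; have [M' pM' /negP] := avoid e; apply; apply: eM.
- by move=> e _; have [M' pM' eM'] := avoid e; exists M'; apply: pm_delete.
- exact: kappa_n.
move=> [_ minE].
have minE' e : e \in E -> Fnum (E :\ e) < #|M|.-1 by move/minE; rewrite cM; lia.
have reg : regular E n.
  by move=> v; apply/anti_leq; rewrite mindeg -cM (deg_upper sE pM swM minE').
have [v _] : exists v, v \in [set: T] by apply/card_gt0P; rewrite cardsT cT; lia.
have kappa_le : kappa E <= n by rewrite -(reg v) kappa_upper // reg cT; lia.
have lambda_le : lambda E <= n by rewrite -(reg v) lambda_upper // cT; lia.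
have lambda_ge : n <= lambda E by apply: (lambda_lower sE); rewrite ?cT //; lia.
by split=> //; split; apply/anti_leq; rewrite ?kappa_le ?kappa_n ?lambda_le ?lambda_ge.
Qed.
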